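(* Let $m\ge 1$, $n=2m$, let $\beta$ be a primitive element of $\mathbb{F}_{2^m}$, let $U$ be the (unique) subgroup of $\mathbb{F}_{2^n}^*$ of order $2^m+1$, and let $\Delta=\{1,\beta,\beta^2,\ldots,\beta^{2^{m-1}-1}\}$. Let $f:\mathbb{F}_{2^n}\to\mathbb{F}_2$ be the Boolean function with support $\mathrm{Supp}(f)=\{yz: y\in\Delta,\ z\in U\}$. Then $f$ has optimal algebraic immunity, i.e. $\mathrm{AI}(f)=m$.
   Context: A Boolean function in $n$ variables is identified with a map $f:\mathbb{F}_{2^n}\to\mathbb{F}_2$ (via a fixed $\mathbb{F}_2$-basis, $\mathbb{F}_{2^n}\cong\mathbb{F}_2^n$); its support is $\mathrm{Supp}(f)=\{x: f(x)=1\}$ and its algebraic degree $\deg(f)$ is the degree of its algebraic normal form (equivalently, if $f(x)=\sum_{i=0}^{2^n-1}f_ix^i$, then $\deg f=\max\{\mathrm{wt}_n(i): f_i\ne0\}$, with $\mathrm{wt}_n(2^n-1)=n$). A function $g$ is an annihilator of $f$ if $fg=0$. The algebraic immunity is $\mathrm{AI}(f)=\min\{\deg(g): g\neq 0,\ fg=0\text{ or }(f+1)g=0\}$; it always satisfies $\mathrm{AI}(f)\le\lceil n/2\rceil$, and $f$ is said to have optimal algebraic immunity if equality holds. Since $\gcd(2^m-1,2^m+1)=1$, every $x\in\mathbb{F}_{2^n}^*$ is uniquely written as $x=yz$ with $y\in\mathbb{F}_{2^m}^*$, $z\in U$. *)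

From HB Require Import structures.
From mathcomp Require Import all_boot all_order all_algebra all_field.
Set Implicit Arguments. Unset Strict Implicit. Unset Printing Implicit Defensive.
Import GRing.Theory.
Local Open Scope ring_scope.

(* Hamming weight of the binary expansion of i (number of ones). Bits at
   positions >= i are zero, so summing over k < i suffices. *)
Definition wt (i : nat) : nat := (\sum_(k < i) odd (i %/ 2 ^ k))%N.

Definition boolfun (F : finFieldType) := F -> bool.

(* Algebraic degree <= d : the (unique) univariate representation
   f(x) = sum_{i=0}^{|F|-1} f_i x^i only has nonzero coefficients f_i with
   wt(i) <= d. *)
Definition alg_deg_le (F : finFieldType) (f : boolfun F) (d : nat) : Prop :=
  exists c : 'I_#|F| -> F,
    (forall i : 'I_#|F|, (d < wt i)%N -> c i = 0) /\
    (forall x : F, (f x)%:R = \sum_(i < #|F|) c i * x ^+ i).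

Definition nonzero_bf (F : finFieldType) (g : boolfun F) : Prop :=
  exists x, g x.

Definition annihilates (F : finFieldType) (g f : boolfun F) : Prop :=
  forall x, f x && g x = false.

Definition AI_candidate (F : finFieldType) (f g : boolfun F) : Prop :=
  nonzero_bf g /\ (annihilates g f \/ annihilates g (fun x => ~~ f x)).

Definition alg_immunity_eq (F : finFieldType) (f : boolfun F) (k : nat) : Prop :=
  (exists g, AI_candidate f g /\ alg_deg_le g k) /\
  (forall g d, AI_candidate f g -> alg_deg_le g d -> (k <= d)%N).

From HB Require Import structures.
From mathcomp Require Import all_boot all_order all_algebra all_field.
From mathcomp Require Import cyclic zify ring.
Import GRing.Theory.
Set Warnings "-notation-overridden -ambiguous-paths".

(* Upper bound: the support has more than half of the points, and for any Z
   with 2|Z| < |F| a nonzero P = sum_(wt e <= m) v_e x^e vanishes on Z (there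
   are more such exponents than points); a scaled trace of P is a Boolean
   annihilator of degree <= m of the indicator of the complement of Z.

   Lower bound: with zeta of order 2^m + 1, f is constant on each "line"
   {beta^j zeta^k : k}.  A function of degree < m vanishing on 2^(m-1) lines
   (or on 2^(m-1) - 1 lines and at 0) is zero: Vandermonde in zeta splits it
   by residues of exponents mod 2^m + 1, Vandermonde in the beta^i kills each
   class, since a class holds at most 2^(m-1) - 1 nonzero exponents of weight
   < m (mirroring the bits maps them to heavy exponents of the same class). *)

Definition wt_low (L i : nat) : nat := (\sum_(k < L) odd (i %/ 2 ^ k))%N.

Lemma wt_low_le L i : (wt_low L i <= L)%N.
Proof.
rewrite /wt_low -[X in (_ <= X)%N]card_ord -sum1_card.
by apply: leq_sum => k _; apply: leq_b1.
Qed.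

Lemma wt_low_ext L e i : (i < 2 ^ L)%N -> wt_low (L + e) i = wt_low L i.
Proof.
move=> hi; rewrite /wt_low big_split_ord /= [X in (_ + X)%N]big1 ?addn0 //.
move=> k _; rewrite divn_small //; apply: leq_trans hi _.
by rewrite leq_exp2l // leq_addr.
Qed.

Lemma wtE L i : (i < 2 ^ L)%N -> wt i = wt_low L i.
Proof.
move=> hi; have hii : (i < 2 ^ i)%N by apply: ltn_expl.
rewrite /wt -/(wt_low i i); case: (leqP L i) => h.
  by rewrite -{1}(subnKC h) wt_low_ext.
by rewrite -(subnKC (ltnW h)) wt_low_ext.
Qed.

Lemma wt_low_cat L1 L2 a b : (a < 2 ^ L1)%N ->
  wt_low (L1 + L2) (a + 2 ^ L1 * b) = (wt_low L1 a + wt_low L2 b)%N.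
Proof.
move=> ha; rewrite /wt_low big_split_ord /=; congr addn.
  apply: eq_bigr => k _ /=.
  have hk : (k < L1)%N := ltn_ord k.
  have -> : (2 ^ L1 = 2 ^ k * 2 ^ (L1 - k))%N by rewrite -expnD subnKC // ltnW.
  rewrite -mulnA addnC mulnC divnMDl ?expn_gt0 // oddD oddM oddX /=.
  by rewrite subn_eq0 leqNgt hk.
apply: eq_bigr => k _ /=.
rewrite expnD divnMA [X in X %/ 2 ^ L1]addnC [_ * b]mulnC divnMDl ?expn_gt0 //.
by rewrite (divn_small ha) addn0.
Qed.

Lemma wt_low_bit b : (b < 2)%N -> wt_low 1 b = b.
Proof. by rewrite /wt_low big_ord1 expn0 divn1; case: b => [|[|]]. Qed.

Lemma wt_low_compl L a : (a < 2 ^ L)%N -> wt_low L (2 ^ L - 1 - a) = (L - wt_low L a)%N.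
Proof.
elim: L a => [|L IH] a ha; first by rewrite /wt_low !big_ord0.
have ha' : (a %/ 2 < 2 ^ L)%N by rewrite ltn_divLR // mulnC -expnS.
have hm : (a %% 2 < 2)%N by rewrite ltn_pmod.
have ea : a = (a %% 2 + 2 ^ 1 * (a %/ 2))%N by rewrite addnC mulnC -divn_eq.
have ec : (2 ^ L.+1 - 1 - a = (1 - a %% 2) + 2 ^ 1 * (2 ^ L - 1 - a %/ 2))%N.
  by rewrite {1}ea expnS; move: ha' hm; move: (a %% 2) (a %/ 2) (2 ^ L) => x y z; lia.
rewrite ec [in RHS]ea -[L.+1]add1n !wt_low_cat ?expn1 ?IH //; last by lia.
rewrite !wt_low_bit //; last by lia.
by have := wt_low_le L (a %/ 2); lia.
Qed.

Lemma wt_compl L a : (a < 2 ^ L)%N -> wt (2 ^ L - 1 - a) = (L - wt a)%N.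
Proof.
move=> ha; have hp : (0 < 2 ^ L)%N by rewrite expn_gt0.
by rewrite (wtE _ _ ha) (wtE L) ?wt_low_compl //; lia.
Qed.

Lemma wt_ones L : wt (2 ^ L - 1) = L.
Proof. by rewrite -[2 ^ L - 1]subn0 wt_compl ?expn_gt0 // /wt big_ord0 subn0. Qed.

(* 2^m - 1 and 2^m + 1 are odd and differ by 2, hence are coprime; their
   product 2^(2m) - 1 is the order of the multiplicative group. *)
Lemma coprime_pow2_pm1 m : (1 <= m)%N -> coprime (2 ^ m - 1) (2 ^ m + 1).
Proof.
move=> hm; have hp : (1 <= 2 ^ m)%N by rewrite expn_gt0.
have -> : (2 ^ m + 1 = 1 * (2 ^ m - 1) + 2)%N by lia.
rewrite /coprime gcdnMDl -/(coprime _ 2) coprimen2 oddB // oddX /=.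
by move: hp; case: m hm.
Qed.

Lemma pow2_pm1_mul m : ((2 ^ m - 1) * (2 ^ m + 1) = 2 ^ (2 * m) - 1)%N.
Proof.
rewrite mulnC expnM -[(2 ^ 2)%N]/(2 * 2)%N expnMn.
have : (1 <= 2 ^ m)%N by rewrite expn_gt0.
by move: (2 ^ m)%N => p; nia.
Qed.

Lemma expn_half {m : nat} : (1 <= m)%N -> (2 ^ m = 2 * 2 ^ (m - 1))%N.
Proof. by move=> hm; rewrite -expnS; congr expn; lia. Qed.

(* In the window [0, K*M) each residue class mod M has at most K elements,
   since such elements are told apart by their residue mod K. *)
Lemma card_residue_class n K M s : coprime K M ->
  (#|[set i : 'I_n | (i < K * M)%N && (i %% M == s)]| <= K)%N.
Proof.
move=> coKM; case: (posnP K) => [->|hK].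
  by rewrite leqn0 cards_eq0; apply/eqP/setP => i; rewrite !inE mul0n.
set C := [set i : 'I_n | _].
pose res (i : 'I_n) : 'I_K := Ordinal (ltn_pmod i hK).
suff inj : {in C &, injective res}.
  by rewrite -(card_in_imset inj) -[X in (_ <= X)%N]card_ord max_card.
move=> i j; rewrite !inE => /andP [hi /eqP si] /andP [hj /eqP sj] /(congr1 val) /= e.
apply: val_inj => /=; apply/eqP; rewrite -(modn_small hi) -(modn_small hj).
by rewrite chinese_remainder // e si sj !eqxx.
Qed.

(* For p = 2^m it swaps the two halves of the 2m-bit
   expansion and flips every bit, so it complements the weight while keeping
   the residue mod p + 1 (as p = -1 mod p + 1). *)
Definition mirror (p i : nat) : nat := (p - 1 - i %/ p + p * (p - 1 - i %% p))%N.

Section Mirror.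
Variables (p i : nat).
Hypotheses (p_gt0 : (0 < p)%N) (i_lt : (i < p * p)%N).

Let quo_lt : (i %/ p < p)%N. Proof. by rewrite ltn_divLR. Qed.
Let rem_lt : (i %% p < p)%N. Proof. by rewrite ltn_pmod. Qed.

Lemma mirror_lt : (mirror p i < p * p)%N.
Proof.
rewrite /mirror; have : (p * (p - 1 - i %% p) <= p * (p - 1))%N.
  by rewrite leq_mul2l leq_subr orbT.
by move: (p * (p - 1 - i %% p))%N => x; nia.
Qed.

Lemma mirror_digits :
  mirror p i %% p = (p - 1 - i %/ p)%N /\ mirror p i %/ p = (p - 1 - i %% p)%N.
Proof.
rewrite /mirror; split.
  by rewrite addnC mulnC modnMDl modn_small //; move: (i %/ p)%N => x; lia.
rewrite [(_ + _)%N]addnC mulnC divnMDl // divn_small ?addn0 //.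
by move: (i %/ p)%N quo_lt => x; lia.
Qed.

Lemma mirrorK : mirror p (mirror p i) = i.
Proof.
have [e1 e2] := mirror_digits; rewrite {1}/mirror e1 e2 {3}(divn_eq i p).
by move: (i %/ p)%N (i %% p)%N quo_lt rem_lt => b a hb ha; nia.
Qed.

Lemma mirror_mod : mirror p i %% (p + 1) = i %% (p + 1).
Proof.
apply/eqP; set y := (i %/ p + p * (i %% p))%N; rewrite -(eqn_modDr y).
have -> : (mirror p i + y = (p - 1) * (p + 1))%N.
  by rewrite /mirror /y; move: (i %/ p)%N (i %% p)%N quo_lt rem_lt => b a hb ha; nia.
have -> : (i + y = (i %% p + i %/ p) * (p + 1))%N.
  by rewrite /y {1}(divn_eq i p); move: (i %/ p)%N (i %% p)%N => b a; nia.
by rewrite !modnMl.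
Qed.

Lemma mirror_top : mirror p i = (p * p - 1)%N -> i = 0%N.
Proof.
rewrite /mirror {3}(divn_eq i p).
by move: (i %/ p)%N (i %% p)%N quo_lt rem_lt => b a hb ha; nia.
Qed.

End Mirror.

Lemma wt_mirror m i : (i < 2 ^ (2 * m))%N ->
  wt (mirror (2 ^ m) i) = (2 * m - wt i)%N.
Proof.
have hp : (0 < 2 ^ m)%N by rewrite expn_gt0.
have hpp : (2 ^ (2 * m) = 2 ^ m * 2 ^ m)%N by rewrite mul2n -addnn expnD.
rewrite hpp => hi; have hb : (i %/ 2 ^ m < 2 ^ m)%N by rewrite ltn_divLR.
have ha : (i %% 2 ^ m < 2 ^ m)%N by rewrite ltn_pmod.
have ei : i = (i %% 2 ^ m + 2 ^ m * (i %/ 2 ^ m))%N by rewrite addnC mulnC -divn_eq.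
rewrite (wtE (2 * m)) ?hpp ?mirror_lt // (wtE (2 * m) i) ?hpp //.
rewrite mul2n -addnn /mirror {3}ei !wt_low_cat ?wt_low_compl //; last first.
  by move: (i %/ 2 ^ m)%N hb => x; lia.
by have := wt_low_le m (i %/ 2 ^ m); have := wt_low_le m (i %% 2 ^ m); lia.
Qed.

Lemma light_lt_top m i : (i < 2 ^ (2 * m))%N -> (wt i < m)%N -> (i < 2 ^ (2 * m) - 1)%N.
Proof.
move=> hi; apply: contraTT; rewrite -leqNgt => top.
have -> : i = (2 ^ (2 * m) - 1)%N by lia.
by rewrite wt_ones -leqNgt leq_pmull.
Qed.

(* The mirror
   sends them injectively to exponents of weight > m in the same class, and
   that class has at most 2^m - 1 members below 2^(2m) - 1. *)
Lemma card_light_class m n (s : nat) : (1 <= m)%N -> n = (2 ^ (2 * m))%N ->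
  (#|[set i : 'I_n | (i %% (2 ^ m + 1) == s) && (wt i < m)%N && (i != 0%N :> nat)]|
     <= 2 ^ (m - 1) - 1)%N.
Proof.
move=> hm hn; set S := [set i : 'I_n | _].
have hp : (0 < 2 ^ m)%N by rewrite expn_gt0.
have hsq : (2 ^ (2 * m) = 2 ^ m * 2 ^ m)%N by rewrite mul2n -addnn expnD.
have lt_sq (i : 'I_n) : (i < 2 ^ m * 2 ^ m)%N by rewrite -hsq -hn.
have mir_lt (i : 'I_n) : (mirror (2 ^ m) i < n)%N by rewrite [X in (_ < X)%N]hn hsq mirror_lt.
pose mo (i : 'I_n) : 'I_n := Ordinal (mir_lt i).
have mo_inj : injective mo.
  move=> i j /(congr1 val) /= e; apply: val_inj => /=.
  by rewrite -(mirrorK _ _ hp (lt_sq i)) e mirrorK.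
pose C := [set i : 'I_n | (i < (2 ^ m - 1) * (2 ^ m + 1))%N && (i %% (2 ^ m + 1) == s)].
have SC : S \subset C.
  apply/subsetP => i; rewrite !inE pow2_pm1_mul => /andP [/andP [-> light] _].
  by rewrite andbT light_lt_top // -hn.
have moSC : mo @: S \subset C.
  apply/subsetP => x /imsetP [i]; rewrite !inE pow2_pm1_mul => /andP [/andP [/eqP si _] i0] ->.
  rewrite /= mirror_mod // si eqxx andbT hsq.
  have : mirror (2 ^ m) i != (2 ^ m * 2 ^ m - 1)%N by apply: contra i0 => /eqP /mirror_top ->.
  by have := mirror_lt _ _ hp (lt_sq i); lia.
have disj : S :&: mo @: S = set0.
  apply/setP => x; rewrite !inE; apply/negP => /andP [+ /imsetP [i + ex]].
  rewrite !inE ex /= wt_mirror -?hn // => /andP [/andP [_ heavy] _] /andP [/andP [_ light] _].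
  by lia.
have : (#|S| + #|mo @: S| <= 2 ^ m - 1)%N.
  rewrite -cardsUI disj cards0 addn0.
  apply: leq_trans (card_residue_class n _ _ s (coprime_pow2_pm1 m hm)).
  by apply: subset_leq_card; rewrite subUset SC moSC.
by rewrite card_imset // (expn_half hm); move: (2 ^ (m - 1))%N => q; lia.
Qed.

Local Open Scope ring_scope.

(* Apply the relations to the coefficients of prod_(k != l) (X - a_k). *)
Lemma vandermonde_vanish (F : fieldType) (I : finType) (A : {set I}) (a d : I -> F)
    (j0 : nat) :
  {in A &, injective a} -> (forall k, k \in A -> a k != 0) ->
  (forall j, (j < #|A|)%N -> \sum_(k in A) d k * a k ^+ (j0 + j) = 0) ->
  forall l, l \in A -> d l = 0.
Proof.
move=> a_inj a_nz rel l lA.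
pose P := \prod_(k in A | k != l) ('X - (a k)%:P).
have szP : (size P <= #|A|)%N.
  apply: leq_trans (size_poly_prod_leq _ _) _.
  rewrite (eq_bigr (fun _ => 2%N)); last by move=> k _; rewrite size_XsubC.
  rewrite sum_nat_const (cardD1 l A) lA /=.
  rewrite (@eq_card _ _ [predD1 A & l]); last by move=> k; rewrite !inE andbC.
  by move: #|[predD1 A & l]| => c; lia.
have P_other k : k \in A -> k != l -> P.[a k] = 0.
  move=> kA kl; rewrite horner_prod (bigD1 k) /=; last by rewrite kA.
  by rewrite !hornerE subrr mul0r.
have P_l : P.[a l] != 0.
  rewrite horner_prod prodf_seq_neq0; apply/allP => k _; apply/implyP => /andP [kA kl].
  by rewrite !hornerE subr_eq0; apply: contra kl => /eqP /a_inj -> //.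
have combo : \sum_(j < size P) P`_j * (\sum_(k in A) d k * a k ^+ (j0 + j))
           = d l * a l ^+ j0 * P.[a l].
  under eq_bigr do rewrite mulr_sumr.
  rewrite exchange_big /= (bigD1 l) //= [X in _ + X]big1 ?addr0 => [|k /andP [kA kl]].
    rewrite horner_coef mulr_sumr; apply: eq_bigr => j _; rewrite exprD; ring.
  transitivity (d k * a k ^+ j0 * P.[a k]); last by rewrite P_other ?mulr0.
  rewrite horner_coef mulr_sumr; apply: eq_bigr => j _; rewrite exprD; ring.
have : d l * a l ^+ j0 * P.[a l] = 0.
  rewrite -combo big1 // => j _.
  by rewrite rel ?mulr0 //; apply: leq_trans (ltn_ord j) szP.
by move/eqP; rewrite !mulf_eq0 expf_eq0 (negbTE (a_nz l lA)) (negbTE P_l) andbF !orbF => /eqP.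
Qed.

Lemma prim_root_neq0 {F : fieldType} {n : nat} {z : F} : n.-primitive_root z -> z != 0.
Proof.
move=> hz; apply/eqP => z0; move: (prim_expr_order hz); rewrite z0 expr0n.
by rewrite gtn_eqF ?(prim_order_gt0 hz) // => /eqP; rewrite eq_sym oner_eq0.
Qed.

Section GridVanishing.
Context {F : fieldType} {K M : nat} {beta zeta : F}.
Hypotheses (coKM : coprime K M) (beta_prim : K.-primitive_root beta)
  (zeta_prim : M.-primitive_root zeta).

(* A function sum_(i < n) c_i x^i whose exponents with c_i != 0 lie in a set E
   of exponents below K * M meeting each residue class mod M in at most L
   elements, and which vanishes on the grid beta^(J0 + j) zeta^k (j < L, any
   k), is identically zero: a Vandermonde argument in zeta separates the
   residue classes mod M, then one in the beta^i (distinct on a class, by the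
   Chinese remainder theorem) kills each class. *)
Lemma grid_vanish {n : nat} (c : 'I_n -> F) (E : {set 'I_n}) (J0 L : nat) :
  (forall i, i \notin E -> c i = 0) ->
  (forall i, i \in E -> (i < K * M)%N) ->
  (forall s : nat, (#|[set i in E | i %% M == s]| <= L)%N) ->
  (forall j k, (j < L)%N -> \sum_(i < n) c i * (beta ^+ (J0 + j) * zeta ^+ k) ^+ i = 0) ->
  forall i, c i = 0.
Proof.
move=> c_out E_lt E_class grid.
have M_gt0 : (0 < M)%N := prim_order_gt0 zeta_prim.
pose cls (i : 'I_n) : 'I_M := Ordinal (ltn_pmod i M_gt0).
pose class_sum j (s : 'I_M) := \sum_(i | cls i == s) c i * beta ^+ (J0 + j) ^+ i.
have class_vanish j (s : 'I_M) : (j < L)%N -> class_sum j s = 0.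
  move=> jL; apply: (vandermonde_vanish _ _ [set: 'I_M] (fun s : 'I_M => zeta ^+ s)
                       (class_sum j) 0%N _ _ _ _ (in_setT s)).
  - move=> s1 s2 _ _ /eqP; rewrite (eq_prim_root_expr zeta_prim) !modn_small // => /eqP.
    exact: val_inj.
  - by move=> k _; rewrite expf_neq0 // (prim_root_neq0 zeta_prim).
  move=> k _; rewrite -[RHS](grid j k jL) (partition_big cls xpredT) //=.
  rewrite (eq_bigl xpredT) => [|t]; last by rewrite inE.
  apply: eq_bigr => t _; rewrite add0n mulr_suml; apply: eq_bigr => i /eqP <-.
  rewrite exprMn -mulrA -!exprM; congr (_ * (_ * _)); apply/eqP.
  by rewrite (eq_prim_root_expr zeta_prim) /= modnMml mulnC.
move=> i; case: (boolP (i \in E)) => [iE|]; last exact: c_out.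
pose Es := [set i' in E | (i' %% M == i %% M)%N].
apply: (vandermonde_vanish _ _ Es (fun i' : 'I_n => beta ^+ i') c J0).
- move=> i1 i2; rewrite !inE => /andP [/E_lt lt1 /eqP s1] /andP [/E_lt lt2 /eqP s2] /eqP.
  rewrite (eq_prim_root_expr beta_prim) => e1; apply: val_inj => /=; apply/eqP.
  by rewrite -(modn_small lt1) -(modn_small lt2) chinese_remainder // e1 s1 s2 !eqxx.
- by move=> k _; rewrite expf_neq0 // (prim_root_neq0 beta_prim).
- move=> j jEs; rewrite -[RHS](class_vanish j (cls i)); last exact: leq_trans jEs (E_class _).
  rewrite /class_sum [RHS](bigID (mem E)) /= [X in _ = _ + X]big1 ?addr0;
    last by move=> i' /andP [_ /c_out ->]; rewrite mul0r.
  apply: eq_big => [i'|i' _]; last by rewrite exprAC.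
  by rewrite inE andbC -val_eqE.
by rewrite inE iE eqxx.
Qed.

End GridVanishing.

Lemma light_grid_vanish (F : fieldType) (m n : nat) (beta zeta : F) (c : 'I_n -> F)
    (J0 : nat) (zero_free : bool) :
  (1 <= m)%N -> n = (2 ^ (2 * m))%N ->
  (2 ^ m - 1).-primitive_root beta -> (2 ^ m + 1).-primitive_root zeta ->
  (forall i : 'I_n, (m <= wt i)%N -> c i = 0) ->
  (zero_free -> forall i : 'I_n, nat_of_ord i = 0%N -> c i = 0) ->
  (forall j k, (j < 2 ^ (m - 1) - zero_free)%N ->
     \sum_(i < n) c i * (beta ^+ (J0 + j) * zeta ^+ k) ^+ i = 0) ->
  forall i, c i = 0.
Proof.
move=> hm hn beta_prim zeta_prim c_heavy c_zero grid.
pose E := [set i : 'I_n | (wt i < m)%N && ~~ (zero_free && (nat_of_ord i == 0%N))].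
apply: (grid_vanish (coprime_pow2_pm1 m hm) beta_prim zeta_prim c E J0 _ _ _ _ grid).
- move=> i; rewrite inE negb_and negbK -leqNgt => /orP [/c_heavy //|/andP [zf /eqP]].
  exact: c_zero.
- move=> i; rewrite inE pow2_pm1_mul => /andP [light _].
  by apply: light_lt_top light; rewrite -hn.
move=> s; clear c_zero grid; set Es := [set i in E | _].
have sub : Es \subset
    [set i : 'I_n | ((i %% (2 ^ m + 1) == s) && (wt i < m) && (i != 0 :> nat))%N]
    :|: [set i : 'I_n | ~~ zero_free && (nat_of_ord i == 0%N)].
  apply/subsetP => i; rewrite !inE => /andP [/andP [light nz] ->]; rewrite light /=.
  by move: nz; case: (nat_of_ord i == 0%N); rewrite ?andbT ?andbF ?orbT ?orbF.
apply: leq_trans (subset_leq_card sub) _; apply: leq_trans (leq_card_setU _ _).1 _.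
have := card_light_class m n s hm hn; clear sub Es E.
have zero_card : (#|[set i : 'I_n | ~~ zero_free && (nat_of_ord i == 0%N)]| <= ~~ zero_free)%N.
  case: zero_free; first by rewrite leqn0 cards_eq0; apply/eqP/setP => i; rewrite !inE.
  apply/card_le1_eqP => i j; rewrite !inE => /eqP i0 /eqP j0.
  by apply: val_inj; rewrite /= i0 j0.
have : (1 <= 2 ^ (m - 1))%N by rewrite expn_gt0.
by case: zero_free zero_card => /=; lia.
Qed.

(* Squaring an exponent: doubling e modulo 2 * H - 1, with 2 * H - 1 fixed.
   For H = 2^L this rotates the (L+1)-bit expansion of e by one place. *)
Definition rotl (H e : nat) : nat := if (e < H)%N then (2 * e)%N else (2 * e + 1 - 2 * H)%N.

Lemma rotl_lt H e : (e < 2 * H)%N -> (rotl H e < 2 * H)%N.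
Proof. by rewrite /rotl; case: ifP; lia. Qed.

Lemma rotl_pow (F : finFieldType) H e (x : F) : #|F| = (2 * H)%N -> (e < 2 * H)%N ->
  x ^+ (2 * e) = x ^+ rotl H e.
Proof.
move=> cardF he; rewrite /rotl; case: ifP => // h.
have -> : (2 * e = (2 * e - 2 * H) + 2 * H)%N by lia.
by rewrite exprD -cardF expf_card -exprSr; congr (_ ^+ _); lia.
Qed.

Lemma wt_rotl L e : (e < 2 * 2 ^ L)%N -> wt (rotl (2 ^ L) e) = wt e.
Proof.
move=> he; have eL : (2 * 2 ^ L = 2 ^ (1 + L))%N by rewrite expnD expn1.
rewrite /rotl (wtE (1 + L)); last by case: ifP; lia.
case: ifP => h.
  rewrite (wtE L e) // -[(2 * e)%N]add0n -(expn1 2) wt_low_cat //.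
  by rewrite wt_low_bit.
have [e' he' ->] : exists2 e', (e' < 2 ^ L)%N & e = (e' + 2 ^ L * 1)%N.
  by exists (e - 2 ^ L)%N; lia.
have -> : (2 * (e' + 2 ^ L * 1) + 1 - 2 * 2 ^ L = 1 + 2 ^ 1 * e')%N by lia.
rewrite (wtE (L + 1)); last by rewrite expnD expn1; lia.
by rewrite !wt_low_cat // !wt_low_bit // addnC.
Qed.

(* For a Boolean function g,
   alg_deg_le g d is exactly deg_le (fun x => (g x)%:R) d. *)
Definition deg_le {F : finFieldType} (h : F -> F) (d : nat) : Prop :=
  exists c : 'I_#|F| -> F,
    (forall i : 'I_#|F|, (d < wt i)%N -> c i = 0) /\
    (forall x : F, h x = \sum_(i < #|F|) c i * x ^+ i).

Lemma pchar2_of_card {F : finFieldType} {n : nat} : #|F| = (2 ^ n)%N -> 2%N \in [pchar F].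
Proof. by move=> cardF; apply: card_finPcharP cardF _. Qed.

Section DegreeClosure.
Context {F : finFieldType} {d : nat}.

Lemma deg_le_ext {h1 h2 : F -> F} : deg_le h1 d -> (forall x, h1 x = h2 x) -> deg_le h2 d.
Proof. by move=> [c [c_heavy e1]] e12; exists c; split => // x; rewrite -e12. Qed.

Lemma deg_le0 : deg_le (fun _ : F => 0) d.
Proof. by exists (fun _ => 0); split => // x; rewrite big1 // => i _; rewrite mul0r. Qed.

Lemma deg_leD {h1 h2 : F -> F} :
  deg_le h1 d -> deg_le h2 d -> deg_le (fun x : F => h1 x + h2 x) d.
Proof.
move=> [c1 [c1_heavy e1]] [c2 [c2_heavy e2]]; exists (fun i => c1 i + c2 i); split.
  by move=> i heavy; rewrite c1_heavy ?c2_heavy ?addr0.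
by move=> x; rewrite e1 e2 -big_split; apply: eq_bigr => i _; rewrite mulrDl.
Qed.

Lemma deg_le_sum (I : Type) (r : seq I) (h : I -> F -> F) :
  (forall k, deg_le (h k) d) -> deg_le (fun x => \sum_(k <- r) h k x) d.
Proof.
move=> hd; elim: r => [|k r IH].
  by apply: (deg_le_ext deg_le0) => x; rewrite big_nil.
by apply: (deg_le_ext (deg_leD (hd k) IH)) => x; rewrite big_cons.
Qed.

Lemma deg_leZ (a : F) {h : F -> F} : deg_le h d -> deg_le (fun x : F => a * h x) d.
Proof.
move=> [c [c_heavy e]]; exists (fun i => a * c i); split.
  by move=> i heavy; rewrite c_heavy ?mulr0.
by move=> x; rewrite e mulr_sumr; apply: eq_bigr => i _; rewrite mulrA.
Qed.

(* On a field of order 2^(n+1), squaring is additive and maps x^e to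
   x^(rotl e), which has the same weight: squaring preserves the degree. *)
Context {n : nat}.
Hypothesis cardF : #|F| = (2 ^ n.+1)%N.

Lemma deg_le_sqr {h : F -> F} : deg_le h d -> deg_le (fun x => h x ^+ 2) d.
Proof.
move=> [c [c_heavy hE]]; have card2 : #|F| = (2 * 2 ^ n)%N by rewrite cardF expnS.
have rotl_ord (i : 'I_#|F|) : (rotl (2 ^ n) i < #|F|)%N.
  by rewrite [X in (_ < X)%N]card2 rotl_lt // -card2.
pose sq (i : 'I_#|F|) : 'I_#|F| := Ordinal (rotl_ord i).
exists (fun e => \sum_(i | sq i == e) c i ^+ 2); split.
  move=> e heavy; rewrite big1 // => i /eqP sq_i; rewrite c_heavy ?expr0n //.
  by move: heavy; rewrite -sq_i /= wt_rotl // -card2.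
move=> x; rewrite hE -(pFrobenius_autE (pchar2_of_card cardF)) rmorph_sum.
rewrite (partition_big sq xpredT) //=.
apply: eq_bigr => e _; rewrite mulr_suml; apply: eq_bigr => i /eqP <-.
by rewrite pFrobenius_autE exprMn -exprM mulnC (rotl_pow _ (2 ^ n)) // -card2.
Qed.

Lemma deg_le_pow2 {h : F -> F} k : deg_le h d -> deg_le (fun x => h x ^+ (2 ^ k)) d.
Proof.
move=> hd; elim: k => [|k IH]; first by apply: (deg_le_ext hd) => x; rewrite expn0 expr1.
by apply: (deg_le_ext (deg_le_sqr IH)) => x; rewrite expnS mulnC exprM.
Qed.

End DegreeClosure.

Lemma poly_vanishing_eq0 (F : finFieldType) (p : {poly F}) :
  (size p <= #|F|)%N -> (forall x, p.[x] = 0) -> p = 0.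
Proof.
move=> size_p p0; apply: (roots_geq_poly_eq0 (rs := enum F)); last by rewrite -cardE.
  by apply/allP => x _; apply/eqP/p0.
exact: enum_uniq.
Qed.

Definition trace {F : fieldType} (N : nat) (y : F) : F := \sum_(k < N) y ^+ (2 ^ k).

Lemma trace0 {F : fieldType} (N : nat) : trace N (0 : F) = 0.
Proof. by rewrite /trace big1 // => k _; rewrite expr0n expn_eq0. Qed.

Section Trace.
Context {F : finFieldType} {n : nat}.
Hypothesis cardF : #|F| = (2 ^ n.+1)%N.

(* The trace is fixed by squaring, hence takes only the values 0 and 1. *)
Lemma trace_bool (y : F) : trace n.+1 y = 0 \/ trace n.+1 y = 1.
Proof.
have sq_fixed : trace n.+1 y ^+ 2 = trace n.+1 y.
  rewrite /trace -(pFrobenius_autE (pchar2_of_card cardF)) rmorph_sum /=.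
  rewrite big_ord_recr big_ord_recl /= pFrobenius_autE -exprM -expnSr -cardF expf_card.
  rewrite expn0 expr1 addrC; congr (_ + _); apply: eq_bigr => k _.
  by rewrite pFrobenius_autE -exprM -expnSr.
have : trace n.+1 y * (trace n.+1 y - 1) == 0.
  by rewrite mulrBr mulr1 -expr2 sq_fixed subrr.
by rewrite mulf_eq0 subr_eq0 => /orP [/eqP|/eqP]; [left|right].
Qed.

(* The trace polynomial sum_k X^(2^k) has degree 2^n < #|F| and is nonzero,
   so it does not vanish everywhere. *)
Lemma trace_neq0 : exists t : F, trace n.+1 t != 0.
Proof.
apply/existsP; apply: contraT; rewrite negb_exists => /forallP trace0.
pose P : {poly F} := \sum_(k < n.+1) 'X^(2 ^ k).
have : P`_1 = 1.
  rewrite /P coef_sum big_ord_recl /= coefXn expn0 eqxx big1 ?addr0 // => k _.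
  rewrite coefXn /bump /= eq_sym gtn_eqF //.
  by rewrite add1n (leq_trans _ (ltn_expl k.+1 (isT : (1 < 2)%N))).
suff -> : P = 0 by rewrite coef0 => /eqP; rewrite eq_sym oner_eq0.
apply: poly_vanishing_eq0 => [|x].
  rewrite /P; apply: (big_ind (fun p : {poly F} => (size p <= #|F|)%N)) => [|p q sp sq|k _].
  - by rewrite size_poly0.
  - by apply: leq_trans (size_polyD _ _) _; rewrite geq_max sp sq.
  by rewrite size_polyXn cardF ltn_exp2l.
rewrite /P horner_sum -[RHS](eqP (negbNE (trace0 x))).
by apply: eq_bigr => k _; rewrite hornerXn.
Qed.

Lemma deg_le_trace {d : nat} {h : F -> F} :
  deg_le h d -> deg_le (fun x => trace n.+1 (h x)) d.
Proof. by move=> hd; apply: deg_le_sum => k; apply: (deg_le_pow2 cardF _ hd). Qed.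

End Trace.

(* At least half of the exponents below 2^(2m) have weight <= m: complementing
   the bits maps the exponents of weight >= m into them. *)
Lemma card_light_exponents m n : n = (2 ^ (2 * m))%N ->
  (n <= 2 * #|[set e : 'I_n | (wt e <= m)%N]|)%N.
Proof.
move=> hn; set W := [set e : 'I_n | _].
pose B := [set e : 'I_n | (m <= wt e)%N].
have BW : (@rev_ord n) @: B \subset W.
  apply/subsetP => x /imsetP [e]; rewrite !inE => heavy ->.
  have e_lt : (e < 2 ^ (2 * m))%N by rewrite -hn.
  rewrite /=; have -> : (n - e.+1 = 2 ^ (2 * m) - 1 - e)%N by lia.
  by rewrite wt_compl //; lia.
have cover : (n <= #|W :|: B|)%N.
  rewrite -[X in (X <= _)%N]card_ord -cardsT; apply: subset_leq_card.
  by apply/subsetP => e _; rewrite !inE leq_total.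
have := subset_leq_card BW; rewrite card_imset; last exact: rev_ord_inj.
by have := (leq_card_setU W B).1; lia.
Qed.

(* Linear algebra: if there are more admissible exponents W than points Z,
   some nonzero combination sum_(e in W) v_e x^e vanishes on Z (the kernel of
   the #|W| x #|Z| evaluation matrix is nontrivial). *)
Lemma vanishing_combination (F : finFieldType) (Z : {set F}) (W : {set 'I_#|F|}) :
  (#|Z| < #|W|)%N ->
  exists v : 'I_#|F| -> F, (exists e, v e != 0) /\ (forall e, e \notin W -> v e = 0) /\
    (forall x, x \in Z -> \sum_(e < #|F|) v e * x ^+ e = 0).
Proof.
move=> hZW.
pose A : 'M[F]_(#|W|, #|Z|) := \matrix_(i, j) ((enum_val j : F) ^+ (enum_val i : 'I_#|F|)).
have : kermx A != 0.
  by rewrite -mxrank_eq0 mxrank_ker -lt0n subn_gt0 (leq_ltn_trans (rank_leq_col A)).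
case/matrix0Pn => i0 [j0 u_nz].
pose u := row i0 (kermx A).
have uA : u *m A = 0 by rewrite -row_mul mulmx_ker row0.
pose v (e : 'I_#|F|) := \sum_(i < #|W| | enum_val i == e) u 0 i.
exists v; split; [|split].
- exists (enum_val j0); rewrite /v (bigD1 j0) //= big1 ?addr0 ?[u 0 j0]mxE //.
  by move=> i /andP [/eqP /enum_val_inj ->]; rewrite eqxx.
- by move=> e eW; rewrite /v big1 // => i /eqP ei; move: eW; rewrite -ei enum_valP.
move=> x xZ; have := congr1 (fun M : 'M_(1, #|Z|) => M 0 (enum_rank_in xZ x)) uA.
rewrite !mxE => uAx; rewrite -[RHS]uAx [RHS](partition_big enum_val xpredT) //=.
apply: eq_bigr => e _; rewrite /v mulr_suml.
by apply: eq_bigr => i /eqP ei; rewrite [A _ _]mxE enum_rankK_in // ei.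
Qed.

Lemma exists_nonroot (F : finFieldType) (v : 'I_#|F| -> F) e0 : v e0 != 0 ->
  exists a : F, \sum_(e < #|F|) v e * a ^+ e != 0.
Proof.
move=> v_nz; apply/existsP; apply: contraT; rewrite negb_exists => /forallP P0.
pose P : {poly F} := \sum_(e < #|F|) v e *: 'X^e.
have : P`_e0 = v e0.
  rewrite /P coef_sum (bigD1 e0) //= coefZ coefXn eqxx mulr1 big1 ?addr0 // => e ne.
  by rewrite coefZ coefXn eq_sym (inj_eq val_inj) (negbTE ne) mulr0.
suff -> : P = 0 by rewrite coef0 => /esym/eqP; rewrite (negbTE v_nz).
apply: poly_vanishing_eq0 => [|a].
  rewrite /P; apply: (big_ind (fun p : {poly F} => (size p <= #|F|)%N)) => [|p q sp sq|e _].
  - by rewrite size_poly0.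
  - by apply: leq_trans (size_polyD _ _) _; rewrite geq_max sp sq.
  by apply: leq_trans (size_scale_leq _ _) _; rewrite size_polyXn.
rewrite /P horner_sum -[RHS](eqP (negbNE (P0 a))).
by apply: eq_bigr => e _; rewrite hornerZ hornerXn.
Qed.

(* Take P = sum_(wt e <= m) v_e x^e nonzero and vanishing on Z, a point a with
   P(a) != 0 and t with trace t = 1; g(x) = trace (t P(x) / P(a)) works. *)
Lemma low_degree_annihilator (F : finFieldType) (m : nat) (Z : {set F}) :
  (1 <= m)%N -> #|F| = (2 ^ (2 * m))%N -> (2 * #|Z| < #|F|)%N ->
  exists g : boolfun F, nonzero_bf g /\ (forall x, x \in Z -> g x = false) /\ alg_deg_le g m.
Proof.
move=> hm cardF small_Z.
have [n cardF'] : exists n, #|F| = (2 ^ n.+1)%N.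
  by exists (2 * m).-1; rewrite prednK ?muln_gt0.
have := card_light_exponents m _ cardF; set W := [set e | _] => card_W.
have [|v [[e0 v_nz] [v_light v_Z]]] := vanishing_combination _ Z W.
  by rewrite -(ltn_pmul2l (isT : (0 < 2)%N)) (leq_trans small_Z card_W).
pose P x := \sum_(e < #|F|) v e * x ^+ e.
have P_deg : deg_le P m.
  by exists v; split => // e heavy; apply: v_light; rewrite inE -ltnNge.
have [a Pa_nz] := exists_nonroot _ _ _ v_nz.
have [t trace_t] := trace_neq0 cardF'.
pose h x := trace n.+1 (t / P a * P x).
have h_bool x : h x = 0 \/ h x = 1 := trace_bool cardF' _.
exists (fun x => h x == 1); split; [|split].
- exists a; rewrite /h divfK //.
  by case: (trace_bool cardF' t) trace_t => ->; rewrite ?eqxx.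
- by move=> x xZ; rewrite /h (v_Z x xZ : P x = 0) mulr0 trace0 eq_sym oner_eq0.
apply: (deg_le_ext (deg_le_trace cardF' (deg_leZ (t / P a) P_deg))) => x.
by rewrite -/(h x); case: (h_bool x) => ->; rewrite ?eqxx // eq_sym oner_eq0.
Qed.

(* The multiplicative group of a finite field is cyclic, so it contains a
   primitive M-th root of unity for every divisor M of #|F| - 1. *)
Lemma exists_prim_root (F : finFieldType) (M : nat) :
  (M %| #|F|.-1)%N -> exists z : F, M.-primitive_root z.
Proof.
move=> dvdM.
have N_gt0 : (0 < #|F|.-1)%N.
  by rewrite -card_finField_unit; apply/card_gt0P; exists 1%g; rewrite inE.
have [g _ g_prim] : exists2 g : F, g \in enum (predC1 0) & #|F|.-1.-primitive_root g.
  apply/hasP; apply: has_prim_root (N_gt0) _ (enum_uniq _) _.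
    apply/allP => x; rewrite mem_enum /= => x_nz; rewrite unity_rootE; apply/eqP.
    apply: (mulfI x_nz); rewrite mulr1 -exprS prednK ?expf_card //.
    exact: leq_trans N_gt0 (leq_pred _).
  by rewrite -cardE cardC1.
by exists (g ^+ (#|F|.-1 %/ M)); apply: dvdn_prim_root.
Qed.

(* If beta has order K and M is prime to K, then beta^j x = beta^j' y with
   x^M = y^M = 1 and j, j' < K forces j = j': raising to the M-th power kills
   x and y, and beta^M is again of order K. *)
Lemma prim_root_mul_inj {F : fieldType} {K M : nat} {beta x y : F} {j j' : nat} :
  coprime K M -> K.-primitive_root beta -> (j < K)%N -> (j' < K)%N ->
  x ^+ M = 1 -> y ^+ M = 1 -> beta ^+ j * x = beta ^+ j' * y -> j = j'.
Proof.
move=> coKM beta_prim hj hj' xM yM e.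
have betaM_prim : K.-primitive_root (beta ^+ M).
  by have := exp_prim_root beta_prim M; rewrite gcdnC (eqP coKM) divn1.
have : (beta ^+ M) ^+ j = (beta ^+ M) ^+ j'.
  by rewrite -!exprM !(mulnC M) !exprM -[LHS]mulr1 -xM -exprMn e exprMn yM mulr1.
by move/eqP; rewrite (eq_prim_root_expr betaM_prim) !modn_small // => /eqP.
Qed.

Section OptimalImmunity.
Variables (m : nat) (F : finFieldType) (beta zeta : F).
Hypotheses (m_gt0 : (1 <= m)%N) (cardF : #|F| = (2 ^ (2 * m))%N)
  (beta_prim : (2 ^ m - 1).-primitive_root beta)
  (zeta_prim : (2 ^ m + 1).-primitive_root zeta).

Definition supp : {set F} :=
  [set y * z | y in [set beta ^+ (nat_of_ord i) | i : 'I_(2 ^ (m - 1))],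
               z in [set z : F | z ^+ (2 ^ m + 1) == 1]].

Let coprimeKM : coprime (2 ^ m - 1) (2 ^ m + 1). Proof. exact: coprime_pow2_pm1. Qed.
Let zeta_unit k : (zeta ^+ k) ^+ (2 ^ m + 1) = 1.
Proof. by rewrite exprAC (prim_expr_order zeta_prim) expr1n. Qed.

Lemma mem_supp j k : (j < 2 ^ (m - 1))%N -> beta ^+ j * zeta ^+ k \in supp.
Proof.
move=> hj; apply: imset2_f; last by rewrite inE zeta_unit.
by apply/imsetP; exists (Ordinal hj).
Qed.

Lemma suppP x : x \in supp ->
  exists2 j, (j < 2 ^ (m - 1))%N & exists2 z, z ^+ (2 ^ m + 1) = 1 & x = beta ^+ j * z.
Proof.
case/imset2P => _ z /imsetP [i _ ->]; rewrite inE => /eqP zU ->.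
by exists (nat_of_ord i) => //; exists z.
Qed.

Lemma notin_supp j k :
  (2 ^ (m - 1) <= j < 2 ^ m - 1)%N -> beta ^+ j * zeta ^+ k \notin supp.
Proof.
move=> /andP [lo hi]; apply/negP => /suppP [j' hj' [z zU e]].
have hj'K : (j' < 2 ^ m - 1)%N by rewrite (expn_half m_gt0); lia.
by have := prim_root_mul_inj coprimeKM beta_prim hi hj'K (zeta_unit k) zU e; lia.
Qed.

Lemma supp0 : 0 \notin supp.
Proof.
apply/negP => /suppP [j _ [z zU]]; apply/eqP; rewrite eq_sym mulf_neq0 //.
  by rewrite expf_neq0 // (prim_root_neq0 beta_prim).
by apply: contra_eq_neq zU => ->; rewrite expr0n addn1 eq_sym oner_neq0.
Qed.

(* The support has 2^(m-1) (2^m + 1) > 2^(2m) / 2 points, as (j, k) maps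
   injectively to beta^j zeta^k; so its complement is less than half of F. *)
Lemma card_compl_supp : (2 * #|~: supp| < #|F|)%N.
Proof.
pose grid (p : 'I_(2 ^ (m - 1)) * 'I_(2 ^ m + 1)) := beta ^+ p.1 * zeta ^+ p.2.
have grid_inj : injective grid.
  move=> [j k] [j' k']; rewrite /grid /= => e.
  have half_lt (i : 'I_(2 ^ (m - 1))) : (i < 2 ^ m - 1)%N.
    by have := ltn_ord i; rewrite (expn_half m_gt0); lia.
  have ej : j = j'.
    apply: val_inj; apply: prim_root_mul_inj coprimeKM beta_prim _ _ _ _ e;
      by rewrite ?half_lt ?zeta_unit.
  move: e; rewrite ej => /(mulfI (expf_neq0 _ (prim_root_neq0 beta_prim))) /eqP.
  rewrite (eq_prim_root_expr zeta_prim) !modn_small // => /eqP ek.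
  by congr pair; apply: val_inj.
have : (#|[set grid p | p : 'I_(2 ^ (m - 1)) * 'I_(2 ^ m + 1)]| <= #|supp|)%N.
  by apply: subset_leq_card; apply/subsetP => x /imsetP [[j k] _ ->]; apply: mem_supp.
rewrite card_imset // card_prod !card_ord.
have := cardsC supp; rewrite cardF mul2n -addnn expnD (expn_half m_gt0).
have : (1 <= 2 ^ (m - 1))%N by rewrite expn_gt0.
by move: #|supp| #|~: supp| (2 ^ (m - 1))%N => s c q; nia.
Qed.

Lemma supp_annihilator_upper :
  exists g, AI_candidate (fun x => x \in supp) g /\ alg_deg_le g m.
Proof.
have [g [g_nz [g_out g_deg]]] := low_degree_annihilator _ _ _ m_gt0 cardF card_compl_supp.
exists g; split=> //; split=> //; right=> x /=.
by case: (boolP (x \in supp)) => //= x_out; apply: g_out; rewrite inE x_out.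
Qed.

(* A function whose exponents all have weight < m and which annihilates f or
   f + 1 is zero: f = 1 on beta^j zeta^k for j < 2^(m-1), while f = 0 at 0
   and on beta^(2^(m-1) + j) zeta^k for j < 2^(m-1) - 1. *)
Lemma supp_annihilator_coeffs (g : boolfun F) (c : 'I_#|F| -> F) :
  (forall i : 'I_#|F|, (m <= wt i)%N -> c i = 0) ->
  (forall x, (g x)%:R = \sum_(i < #|F|) c i * x ^+ i) ->
  annihilates g (fun x => x \in supp) \/ annihilates g (fun x => x \notin supp) ->
  forall i, c i = 0.
Proof.
move=> c_heavy g_repr.
have g_root x : g x = false -> \sum_(i < #|F|) c i * x ^+ i = 0.
  by move=> gx; rewrite -g_repr gx.
have vanish J0 zero_free :=
  light_grid_vanish _ m _ beta zeta c J0 zero_free m_gt0 cardF beta_prim zeta_prim c_heavy.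
case=> ann.
  apply: (vanish 0%N false) => //.
  move=> j k; rewrite subn0 add0n => hj; apply: g_root.
  by move: (ann (beta ^+ j * zeta ^+ k)); rewrite mem_supp.
apply: (vanish (2 ^ (m - 1))%N true).
  move=> _ i i0; have := g_root 0; move: (ann 0); rewrite supp0 /= => -> /(_ erefl).
  rewrite (bigD1 i) //= i0 expr0 mulr1 big1 ?addr0 // => i' ne.
  have i'_nz : nat_of_ord i' != 0%N.
    by apply: contra ne => /eqP i'0; apply/eqP/val_inj; rewrite /= i'0 i0.
  by rewrite expr0n (negbTE i'_nz) mulr0.
move=> j k hj; apply: g_root; move: (ann (beta ^+ (2 ^ (m - 1) + j) * zeta ^+ k)).
by rewrite notin_supp //= (expn_half m_gt0); lia.
Qed.

Lemma supp_annihilator_lower g d :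
  AI_candidate (fun x => x \in supp) g -> alg_deg_le g d -> (m <= d)%N.
Proof.
move=> [[x0 g_x0] ann] [c [c_heavy g_repr]]; rewrite leqNgt; apply/negP => d_lt.
have c_light (i : 'I_#|F|) : (m <= wt i)%N -> c i = 0.
  by move=> heavy; rewrite c_heavy // (leq_trans d_lt).
have c0 := supp_annihilator_coeffs g c c_light g_repr ann.
move: (g_repr x0); rewrite g_x0 big1 => [/eqP|i _]; last by rewrite c0 mul0r.
by rewrite oner_eq0.
Qed.

End OptimalImmunity.

Theorem theorem1 (m : nat) (F : finFieldType) (beta : F) :
  (1 <= m)%N ->
  #|F| = (2 ^ (2 * m))%N ->
  (* beta lies in the subfield F_{2^m} and is a primitive element of it *)
  beta ^+ (2 ^ m) = beta ->
  (2 ^ m - 1)%N.-primitive_root beta ->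
  let U : {set F} := [set z : F | z ^+ (2 ^ m + 1) == 1] in
  let Delta : {set F} := [set beta ^+ (nat_of_ord i) | i : 'I_(2 ^ (m - 1))] in
  let Supp : {set F} := [set y * z | y in Delta, z in U] in
  alg_immunity_eq (fun x : F => x \in Supp) m.
Proof.
move=> m_gt0 cardF _ beta_prim U Delta Supp.
have [zeta zeta_prim] : exists zeta : F, (2 ^ m + 1).-primitive_root zeta.
  by apply: exists_prim_root; rewrite cardF -subn1 -pow2_pm1_mul dvdn_mull.
split.
  exact: supp_annihilator_upper m_gt0 cardF beta_prim zeta_prim.
exact: supp_annihilator_lower m_gt0 cardF beta_prim zeta_prim.
Qed.
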